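(* Let $u_t+uu_x=A^2(t,x)u_{xx}+A^1(t,x)u_x$ be an equation of the class $\hat{\mathcal L}_1$ and let $\mathfrak g_\kappa$ be its maximal Lie invariance algebra. Then $\mathfrak g_\kappa$ consists of the vector fields of the form $Q=D(\tau)+\alpha S^1+\beta S^0+P(\chi)$, where \[ D(\tau)=\tau\partial_t+\tau_tx\partial_x,\quad S^1=x\partial_x+u\partial_u,\quad S^0=\partial_u,\quad P(\chi)=\chi\partial_x, \] $\alpha,\beta$ are constants and $\tau,\chi$ are smooth functions of $t$ satisfying the classifying equations \[ \tau A^2_t+\big((\tau_t+\alpha)x+\chi\big)A^2_x=(\tau_t+2\alpha)A^2, \] \[ \tau A^1_t+\big((\tau_t+\alpha)x+\chi\big)A^1_x=\alpha A^1-\tau_{tt}x-\chi_t+\beta. \]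
   Context: All functions are smooth. $\hat{\mathcal L}_1$ denotes the class of equations $u_t+uu_x=A^2(t,x)u_{xx}+A^1(t,x)u_x$ for $u(t,x)$ with arbitrary elements $A^1,A^2$ smooth functions of $(t,x)$ with $A^2\neq0$ and $A^1_{xx}\neq0$ (superscripts are indices). The maximal Lie invariance algebra of an equation is the Lie algebra of all vector fields on the space $(t,x,u)$ that generate one-parameter groups of point symmetries of the equation. *)

From Stdlib Require Import Reals List.
From Coquelicot Require Import Coquelicot.
Open Scope R_scope.

Definition smooth1 (f : R -> R) : Prop := forall (n : nat) (t : R), ex_derive_n f n t.

Definition pd_t2 (f : R -> R -> R) : R -> R -> R :=
  fun t x => Derive (fun s => f s x) t.
Definition pd_x2 (f : R -> R -> R) : R -> R -> R :=
  fun t x => Derive (fun s => f t s) x.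

(* iterated partial derivatives; [true] = d/dt, [false] = d/dx *)
Fixpoint ipd2 (l : list bool) (f : R -> R -> R) : R -> R -> R :=
  match l with
  | nil => f
  | b :: l' => if b then pd_t2 (ipd2 l' f) else pd_x2 (ipd2 l' f)
  end.

Definition smooth2 (f : R -> R -> R) : Prop :=
  forall l : list bool,
    (forall t x, ex_derive (fun s => ipd2 l f s x) t /\
                 ex_derive (fun s => ipd2 l f t s) x) /\
    (forall t x, continuous (fun p : R * R => ipd2 l f (fst p) (snd p)) (t, x)).

Definition pd_t (f : R -> R -> R -> R) : R -> R -> R -> R :=
  fun t x u => Derive (fun s => f s x u) t.
Definition pd_x (f : R -> R -> R -> R) : R -> R -> R -> R :=
  fun t x u => Derive (fun s => f t s u) x.
Definition pd_u (f : R -> R -> R -> R) : R -> R -> R -> R :=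
  fun t x u => Derive (fun s => f t x s) u.

Inductive dir3 := Dt | Dx | Du.

Definition pd3 (d : dir3) : (R -> R -> R -> R) -> R -> R -> R -> R :=
  match d with Dt => pd_t | Dx => pd_x | Du => pd_u end.

Fixpoint ipd3 (l : list dir3) (f : R -> R -> R -> R) : R -> R -> R -> R :=
  match l with
  | nil => f
  | d :: l' => pd3 d (ipd3 l' f)
  end.

Definition smooth3 (f : R -> R -> R -> R) : Prop :=
  forall l : list dir3,
    (forall t x u, ex_derive (fun s => ipd3 l f s x u) t /\
                   ex_derive (fun s => ipd3 l f t s u) x /\
                   ex_derive (fun s => ipd3 l f t x s) u) /\
    (forall t x u,
        continuous (fun p : R * R * R => ipd3 l f (fst (fst p)) (snd (fst p)) (snd p))
                   (t, x, u)).

(* Total derivatives on the second-order jet space with coordinates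
   (t,x,u,ut,ux,utt,utx,uxx), for f = f(t,x,u). *)
Definition Dt_tot (f : R -> R -> R -> R) (t x u ut : R) : R :=
  pd_t f t x u + ut * pd_u f t x u.
Definition Dx_tot (f : R -> R -> R -> R) (t x u ux : R) : R :=
  pd_x f t x u + ux * pd_u f t x u.
Definition Dxx_tot (f : R -> R -> R -> R) (t x u ux uxx : R) : R :=
  pd_x (pd_x f) t x u + 2 * ux * pd_u (pd_x f) t x u
  + ux ^ 2 * pd_u (pd_u f) t x u + uxx * pd_u f t x u.

Definition eta_T (tau xi eta : R -> R -> R -> R) (t x u ut ux : R) : R :=
  Dt_tot eta t x u ut - ut * Dt_tot tau t x u ut - ux * Dt_tot xi t x u ut.
Definition eta_X (tau xi eta : R -> R -> R -> R) (t x u ut ux : R) : R :=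
  Dx_tot eta t x u ux - ut * Dx_tot tau t x u ux - ux * Dx_tot xi t x u ux.
Definition eta_XX (tau xi eta : R -> R -> R -> R) (t x u ut ux utx uxx : R) : R :=
  Dxx_tot eta t x u ux uxx - 2 * utx * Dx_tot tau t x u ux
  - ut * Dxx_tot tau t x u ux uxx - 2 * uxx * Dx_tot xi t x u ux
  - ux * Dxx_tot xi t x u ux uxx.

Definition Delta (A1 A2 : R -> R -> R) (t x u ut ux uxx : R) : R :=
  ut + u * ux - A2 t x * uxx - A1 t x * ux.

Definition pr2Q_Delta (A1 A2 : R -> R -> R) (tau xi eta : R -> R -> R -> R)
    (t x u ut ux utx uxx : R) : R :=
  eta_T tau xi eta t x u ut ux + eta t x u * ux + u * eta_X tau xi eta t x u ut ux
  - (tau t x u * pd_t2 A2 t x + xi t x u * pd_x2 A2 t x) * uxx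
  - A2 t x * eta_XX tau xi eta t x u ut ux utx uxx
  - (tau t x u * pd_t2 A1 t x + xi t x u * pd_x2 A1 t x) * ux
  - A1 t x * eta_X tau xi eta t x u ut ux.

(* Q = tau d_t + xi d_x + eta d_u (smooth coefficients on (t,x,u)-space) belongs
   to the maximal Lie invariance algebra of the equation: infinitesimal
   invariance criterion  pr^(2)Q(Delta) = 0  whenever  Delta = 0. *)
Definition in_max_Lie_inv_alg (A1 A2 : R -> R -> R) (tau xi eta : R -> R -> R -> R) : Prop :=
  smooth3 tau /\ smooth3 xi /\ smooth3 eta /\
  forall t x u ut ux utx uxx : R,
    Delta A1 A2 t x u ut ux uxx = 0 ->
    pr2Q_Delta A1 A2 tau xi eta t x u ut ux utx uxx = 0.

Definition in_class_L1hat (A1 A2 : R -> R -> R) : Prop :=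
  smooth2 A1 /\ smooth2 A2 /\
  (forall t x, A2 t x <> 0) /\
  (forall t x, pd_x2 (pd_x2 A1) t x <> 0).

From Pilot Require Import Defs.
From Stdlib Require Import Reals Lra FunctionalExtensionality List.
From Coquelicot Require Import Coquelicot.
Import ListNotations.
Open Scope R_scope.

(* After u_t is eliminated through the equation, the invariance criterion
   is a polynomial identity in the remaining jet variables.  Its coefficients of u_tx, u_x u_xx
   and u_x^2 force tau = T(t), xi = X(t, x) and eta = F(t, x) u + G(t, x); for fields of this
   form the criterion splits into six determining equations.  They give F_x = 0,
   X_x = T' + F, G_x = -F_t and G_t = A1 G_x.  Were F_t nonzero at some t, the last one would
   make A1(t, .) affine, contradicting A1_xx <> 0; hence F = alpha and G = beta are constants,
   X = (T' + alpha) x + chi(t), and the two determining equations left are the classifying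
   equations.  Conversely, for such data all six determining equations hold. *)

Lemma eq_of_Derive_eq0 (f : R -> R) :
  (forall s, ex_derive f s) -> (forall s, Derive f s = 0) -> forall a b, f a = f b.
Proof.
  intros Hd H0 a b.
  destruct (MVT_abs f (Derive f) a b) as [c [Hc _]].
  - intros c _. apply is_derive_Reals, Derive_correct, Hd.
  - rewrite H0, Rabs_R0, Rmult_0_l, Rabs_minus_sym in Hc.
    apply Rabs_eq_0 in Hc. lra.
Qed.

Lemma affine_of_Derive_const (f : R -> R) (c : R) :
  (forall s, ex_derive f s) -> (forall s, Derive f s = c) ->
  forall s, f s = c * s + f 0.
Proof.
  intros Hd Hc s.
  assert (Hdiff : forall y, ex_derive (fun s => f s - c * s) y).
  { intro y. apply (ex_derive_minus f (fun s => c * s)); auto. auto_derive; auto. }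
  assert (E : f s - c * s = f 0 - c * 0).
  { apply (eq_of_Derive_eq0 (fun s => f s - c * s) Hdiff).
    intro y. rewrite (Derive_minus f (fun s => c * s)); auto.
    - rewrite Hc, (is_derive_unique (fun s => c * s) y c); [ring|].
      auto_derive; auto; ring.
    - auto_derive; auto. }
  lra.
Qed.

Lemma Derive_affine_comb (p q : R -> R) (u x : R) :
  ex_derive p x -> ex_derive q x ->
  Derive (fun s => p s * u + q s) x = Derive p x * u + Derive q x.
Proof.
  intros Hp Hq. apply is_derive_unique.
  auto_derive; auto. rewrite !Rmult_1_l. reflexivity.
Qed.

Lemma Derive_eq0_of_const (g : R -> R) (c : R) :
  (forall s, g s = c) -> forall s, Derive g s = 0.
Proof. intros Hg s. rewrite (Derive_ext g (fun _ => c)) by exact Hg. apply Derive_const. Qed.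

Lemma Derive_Derive_affine (g : R -> R) (a b : R) :
  (forall s, g s = a * s + b) -> forall s, Derive (Derive g) s = 0.
Proof.
  intros Hg. apply (Derive_eq0_of_const _ a).
  intro y. rewrite (Derive_ext g (fun s => a * s + b)) by exact Hg.
  apply is_derive_unique. auto_derive; auto; ring.
Qed.

Lemma smooth1_ex_derive (f : R -> R) : smooth1 f -> forall t, ex_derive f t.
Proof. intros Hf t. exact (Hf 1%nat t). Qed.

Lemma smooth1_Derive (f : R -> R) : smooth1 f -> smooth1 (Derive f).
Proof.
  intros Hf [|n] t; [exact I|].
  apply (ex_derive_ext (Derive_n f (n + 1))).
  - intro s. symmetry. exact (Derive_n_comp f n 1 s).
  - exact (Hf (S (n + 1)) t).
Qed.

Lemma smooth1_const (c : R) : smooth1 (fun _ => c).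
Proof. intros n t. apply ex_derive_n_const. Qed.

Lemma smooth1_plus (f g : R -> R) :
  smooth1 f -> smooth1 g -> smooth1 (fun t => f t + g t).
Proof.
  intros Hf Hg n t.
  apply ex_derive_n_plus; exists (mkposreal 1 Rlt_0_1); intros; auto.
Qed.

Definition ex_pd2 (f : R -> R -> R) : Prop :=
  forall t x, ex_derive (fun s => f s x) t /\ ex_derive (fun s => f t s) x.

Lemma ex_pd2_const (c : R) : ex_pd2 (fun _ _ => c).
Proof. intros t x. split; apply ex_derive_const. Qed.

Lemma pd_x2_const (c : R) : pd_x2 (fun _ _ => c) = fun _ _ => 0.
Proof.
  do 2 (apply functional_extensionality; intro). unfold pd_x2. apply Derive_const.
Qed.

Lemma pd_t_t_only (T : R -> R) : pd_t (fun t _ _ => T t) = fun t _ _ => Derive T t.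
Proof. reflexivity. Qed.

Lemma pd_x_t_only (T : R -> R) : pd_x (fun t _ _ => T t) = fun _ _ _ => 0.
Proof.
  do 3 (apply functional_extensionality; intro). unfold pd_x. apply Derive_const.
Qed.

Lemma pd_t_tx (X : R -> R -> R) : pd_t (fun t x _ => X t x) = fun t x _ => pd_t2 X t x.
Proof. reflexivity. Qed.

Lemma pd_x_tx (X : R -> R -> R) : pd_x (fun t x _ => X t x) = fun t x _ => pd_x2 X t x.
Proof. reflexivity. Qed.

Lemma pd_u_tx (X : R -> R -> R) : pd_u (fun t x _ => X t x) = fun _ _ _ => 0.
Proof.
  do 3 (apply functional_extensionality; intro). unfold pd_u. apply Derive_const.
Qed.

Lemma pd_t_u_affine (F G : R -> R -> R) : ex_pd2 F -> ex_pd2 G ->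
  pd_t (fun t x u => F t x * u + G t x) = fun t x u => pd_t2 F t x * u + pd_t2 G t x.
Proof.
  intros HF HG. do 3 (apply functional_extensionality; intro).
  apply Derive_affine_comb; [apply (proj1 (HF _ _)) | apply (proj1 (HG _ _))].
Qed.

Lemma pd_x_u_affine (F G : R -> R -> R) : ex_pd2 F -> ex_pd2 G ->
  pd_x (fun t x u => F t x * u + G t x) = fun t x u => pd_x2 F t x * u + pd_x2 G t x.
Proof.
  intros HF HG. do 3 (apply functional_extensionality; intro).
  apply Derive_affine_comb; [apply (proj2 (HF _ _)) | apply (proj2 (HG _ _))].
Qed.

Lemma pd_u_u_affine (F G : R -> R -> R) :
  pd_u (fun t x u => F t x * u + G t x) = fun t x _ => F t x.
Proof.
  do 3 (apply functional_extensionality; intro).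
  unfold pd_u. apply is_derive_unique. auto_derive; auto. ring.
Qed.

Lemma smooth3_ex_derive_t (f : R -> R -> R -> R) (l : list dir3) :
  smooth3 f -> forall t x u, ex_derive (fun s => ipd3 l f s x u) t.
Proof. intros Hf t x u. exact (proj1 (proj1 (Hf l) t x u)). Qed.

Lemma smooth3_ex_derive_x (f : R -> R -> R -> R) (l : list dir3) :
  smooth3 f -> forall t x u, ex_derive (fun s => ipd3 l f t s u) x.
Proof. intros Hf t x u. exact (proj1 (proj2 (proj1 (Hf l) t x u))). Qed.

Lemma smooth3_ex_derive_u (f : R -> R -> R -> R) (l : list dir3) :
  smooth3 f -> forall t x u, ex_derive (fun s => ipd3 l f t x s) u.
Proof. intros Hf t x u. exact (proj2 (proj2 (proj1 (Hf l) t x u))). Qed.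

Lemma ex_pd2_of_smooth3 (f : R -> R -> R -> R) (l : list dir3) (u : R) :
  smooth3 f -> ex_pd2 (fun t x => ipd3 l f t x u).
Proof.
  intros Hf t x.
  split; [apply smooth3_ex_derive_t | apply smooth3_ex_derive_x]; exact Hf.
Qed.

Lemma smooth1_of_smooth3 (f : R -> R -> R -> R) (l : list dir3) (x u : R) :
  smooth3 f -> smooth1 (fun t => ipd3 l f t x u).
Proof.
  intros Hf.
  assert (Hn : forall k s, Derive_n (fun t => ipd3 l f t x u) k s
                           = ipd3 (repeat Dt k ++ l) f s x u).
  { induction k as [|k IH]; intro s; [reflexivity|].
    apply Derive_ext. exact IH. }
  intros [|n] t; [exact I|].
  apply (ex_derive_ext (fun s => ipd3 (repeat Dt n ++ l) f s x u)).
  - intro s. symmetry. apply Hn.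
  - apply smooth3_ex_derive_t. exact Hf.
Qed.

Lemma smooth3_ext (f g : R -> R -> R -> R) :
  (forall t x u, f t x u = g t x u) -> smooth3 f -> smooth3 g.
Proof.
  intros E Hf.
  replace g with f; [exact Hf|].
  do 3 (apply functional_extensionality; intro). apply E.
Qed.

Lemma ipd3_affine (l : list dir3) (p q : R -> R) (c : R) :
  smooth1 p -> smooth1 q ->
  exists p' q' c', smooth1 p' /\ smooth1 q' /\
    ipd3 l (fun t x u => p t + q t * x + c * u) = fun t x u => p' t + q' t * x + c' * u.
Proof.
  revert p q c. induction l as [|d l IH]; intros p q c Hp Hq.
  - exists p, q, c. auto.
  - destruct (IH p q c Hp Hq) as [p' [q' [c' [Hp' [Hq' E]]]]].
    simpl. rewrite E.
    destruct d; simpl.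
    + exists (Derive p'), (Derive q'), 0.
      split; [|split]; try (apply smooth1_Derive; assumption).
      do 3 (apply functional_extensionality; intro).
      apply is_derive_unique.
      auto_derive; [repeat split; apply smooth1_ex_derive; assumption|].
      rewrite Rmult_0_l, Rplus_0_r, !Rmult_1_l. reflexivity.
    + exists q', (fun _ => 0), 0. split; [|split]; auto using smooth1_const.
      do 3 (apply functional_extensionality; intro).
      apply is_derive_unique. auto_derive; auto. ring.
    + exists (fun _ => c'), (fun _ => 0), 0. split; [|split]; auto using smooth1_const.
      do 3 (apply functional_extensionality; intro).
      apply is_derive_unique. auto_derive; auto. ring.
Qed.

Lemma continuous_of_t (g : R -> R) (z : R * R * R) :
  smooth1 g -> continuous (fun p : R * R * R => g (fst (fst p))) z.
Proof.
  intros Hg.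
  apply (continuous_comp (fun p : R * R * R => fst (fst p)) g).
  - apply (continuous_comp (fun p : R * R * R => fst p) fst);
      apply continuous_fst.
  - apply (@ex_derive_continuous R_AbsRing R_NormedModule), smooth1_ex_derive, Hg.
Qed.

Lemma smooth3_affine (p q : R -> R) (c : R) :
  smooth1 p -> smooth1 q -> smooth3 (fun t x u => p t + q t * x + c * u).
Proof.
  intros Hp Hq l.
  destruct (ipd3_affine l p q c Hp Hq) as [p' [q' [c' [Hp' [Hq' ->]]]]].
  split.
  - intros t x u. repeat split; auto_derive; auto;
      repeat split; apply smooth1_ex_derive; assumption.
  - intros t x u.
    apply (@continuous_plus _ R_AbsRing R_NormedModule
             (fun p : R * R * R => p' (fst (fst p)) + q' (fst (fst p)) * snd (fst p))
             (fun p : R * R * R => c' * snd p)).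
    + apply (@continuous_plus _ R_AbsRing R_NormedModule
               (fun p : R * R * R => p' (fst (fst p)))
               (fun p : R * R * R => q' (fst (fst p)) * snd (fst p))).
      * apply continuous_of_t, Hp'.
      * apply (@continuous_mult _ R_AbsRing); [apply continuous_of_t, Hq'|].
        apply (continuous_comp (fun p : R * R * R => fst p) snd);
          [apply continuous_fst | apply continuous_snd].
    + apply (@continuous_mult _ R_AbsRing);
        [apply continuous_const | apply continuous_snd].
Qed.

Definition invariant_on_solutions (A1 A2 : R -> R -> R) (tau xi eta : R -> R -> R -> R) : Prop :=
  forall t x u ux utx uxx,
    pr2Q_Delta A1 A2 tau xi eta t x u (- u * ux + A2 t x * uxx + A1 t x * ux) ux utx uxx = 0.

Lemma in_max_Lie_inv_alg_iff (A1 A2 : R -> R -> R) (tau xi eta : R -> R -> R -> R) :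
  in_max_Lie_inv_alg A1 A2 tau xi eta <->
  smooth3 tau /\ smooth3 xi /\ smooth3 eta /\ invariant_on_solutions A1 A2 tau xi eta.
Proof.
  unfold in_max_Lie_inv_alg, invariant_on_solutions, Defs.Delta.
  split; intros [Htau [Hxi [Heta H]]]; do 3 (split; [assumption|]).
  - intros t x u ux utx uxx. apply H. ring.
  - intros t x u ut ux utx uxx HD.
    replace ut with (- u * ux + A2 t x * uxx + A1 t x * ux) by lra. apply H.
Qed.

Ltac unfold_prolongation :=
  unfold invariant_on_solutions, pr2Q_Delta, eta_T, eta_X, eta_XX,
    Dt_tot, Dx_tot, Dxx_tot in *.

Section Reduction.

Variables A1 A2 : R -> R -> R.
Hypothesis A2_neq0 : forall t x, A2 t x <> 0.

(* The coefficients of u_tx and u_x u_tx are 2 A2 tau_x and 2 A2 tau_u. *)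
Lemma tau_depends_on_t_only (tau xi eta : R -> R -> R -> R) :
  smooth3 tau -> invariant_on_solutions A1 A2 tau xi eta ->
  exists T, tau = fun t _ _ => T t.
Proof.
  intros Hs HE. unfold_prolongation.
  assert (Hd : forall t x u, pd_x tau t x u = 0 /\ pd_u tau t x u = 0).
  { intros t x u.
    pose proof (HE t x u 0 0 0) as e0. pose proof (HE t x u 0 1 0) as e1.
    pose proof (HE t x u 1 0 0) as e2. pose proof (HE t x u 1 1 0) as e3.
    split; apply (Rmult_eq_reg_l (A2 t x)); auto; lra. }
  exists (fun t => tau t 0 0).
  do 3 (apply functional_extensionality; intro).
  rewrite (eq_of_Derive_eq0 (fun s => tau _ _ s) (smooth3_ex_derive_u tau [] Hs _ _)
             (fun s => proj2 (Hd _ _ s)) _ 0).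
  exact (eq_of_Derive_eq0 (fun s => tau _ s 0) (fun s => smooth3_ex_derive_x tau [] Hs _ s 0)
           (fun s => proj1 (Hd _ s 0)) _ 0).
Qed.

(* The coefficient of u_x u_xx is 2 A2 xi_u. *)
Lemma xi_independent_of_u (T : R -> R) (xi eta : R -> R -> R -> R) :
  smooth3 xi -> invariant_on_solutions A1 A2 (fun t _ _ => T t) xi eta ->
  exists X, xi = fun t x _ => X t x.
Proof.
  intros Hs HE. unfold_prolongation.
  rewrite pd_t_t_only, !pd_x_t_only, !pd_u_tx in HE.
  assert (Hd : forall t x u, pd_u xi t x u = 0).
  { intros t x u.
    pose proof (HE t x u 0 0 0) as e0. pose proof (HE t x u 0 0 1) as e1.
    pose proof (HE t x u 1 0 0) as e2. pose proof (HE t x u 1 0 1) as e3.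
    apply (Rmult_eq_reg_l (A2 t x)); auto; lra. }
  exists (fun t x => xi t x 0).
  do 3 (apply functional_extensionality; intro).
  exact (eq_of_Derive_eq0 (fun s => xi _ _ s) (smooth3_ex_derive_u xi [] Hs _ _) (Hd _ _) _ 0).
Qed.

(* The coefficient of u_x^2 is - A2 eta_uu. *)
Lemma pd_uu_eta_eq0 (T : R -> R) (X : R -> R -> R) (eta : R -> R -> R -> R) :
  invariant_on_solutions A1 A2 (fun t _ _ => T t) (fun t x _ => X t x) eta ->
  forall t x u, pd_u (pd_u eta) t x u = 0.
Proof.
  intros HE t x u. unfold_prolongation.
  rewrite pd_t_t_only, !pd_x_t_only, pd_t_tx, !pd_x_tx, !pd_u_tx in HE.
  pose proof (HE t x u 0 0 0) as e0. pose proof (HE t x u 1 0 0) as e1.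
  pose proof (HE t x u (-1) 0 0) as e2.
  apply (Rmult_eq_reg_l (A2 t x)); auto; lra.
Qed.

End Reduction.

Lemma u_affine_of_pd_uu_eq0 (f : R -> R -> R -> R) :
  smooth3 f -> (forall t x u, pd_u (pd_u f) t x u = 0) ->
  f = fun t x u => pd_u f t x 0 * u + f t x 0.
Proof.
  intros Hs H0. do 3 (apply functional_extensionality; intro).
  apply affine_of_Derive_const; [exact (smooth3_ex_derive_u f [] Hs _ _)|].
  intro s.
  exact (eq_of_Derive_eq0 (fun s => pd_u f _ _ s) (smooth3_ex_derive_u f [Du] Hs _ _)
           (H0 _ _) s 0).
Qed.

Definition determining_system (A1 A2 : R -> R -> R) (T : R -> R) (X F G : R -> R -> R) : Prop :=
  forall t x,
    T t * pd_t2 A2 t x + X t x * pd_x2 A2 t x = (2 * pd_x2 X t x - Derive T t) * A2 t x /\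
    F t x = pd_x2 X t x - Derive T t /\
    T t * pd_t2 A1 t x + X t x * pd_x2 A1 t x
      = G t x - pd_t2 X t x - 2 * A2 t x * pd_x2 F t x + A2 t x * pd_x2 (pd_x2 X) t x
        + (pd_x2 X t x - Derive T t) * A1 t x /\
    pd_x2 F t x = 0 /\
    pd_t2 F t x + pd_x2 G t x = A2 t x * pd_x2 (pd_x2 F) t x + A1 t x * pd_x2 F t x /\
    pd_t2 G t x = A2 t x * pd_x2 (pd_x2 G) t x + A1 t x * pd_x2 G t x.

(* For fields of this form the criterion is a polynomial in u, u_x, u_xx whose coefficients
   of u_xx, u u_x, u_x, u^2, u and 1 are the six determining equations. *)
Lemma invariant_reduced_iff (A1 A2 : R -> R -> R) (T : R -> R) (X F G : R -> R -> R) :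
  ex_pd2 F -> ex_pd2 G -> ex_pd2 (pd_x2 F) -> ex_pd2 (pd_x2 G) ->
  invariant_on_solutions A1 A2 (fun t _ _ => T t) (fun t x _ => X t x)
    (fun t x u => F t x * u + G t x)
  <-> determining_system A1 A2 T X F G.
Proof.
  intros HF HG HFx HGx.
  unfold_prolongation.
  rewrite pd_t_t_only, !pd_x_t_only, pd_t_tx, !pd_x_tx, !pd_u_tx,
    (pd_t_u_affine F G HF HG), (pd_x_u_affine F G HF HG),
    (pd_x_u_affine (pd_x2 F) (pd_x2 G) HFx HGx), !pd_u_u_affine, pd_u_tx.
  cbv beta. split.
  - intros HE t x.
    pose proof (HE t x 0 0 0 0) as e0. pose proof (HE t x 0 0 0 1) as e1.
    pose proof (HE t x 0 1 0 0) as e2. pose proof (HE t x 1 1 0 0) as e3.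
    pose proof (HE t x 1 0 0 0) as e4. pose proof (HE t x (-1) 0 0 0) as e5.
    repeat split; lra.
  - intros Hsys t x u ux utx uxx.
    destruct (Hsys t x) as [E1 [E2 [E3 [E4 [E5 E6]]]]].
    pose proof (f_equal (fun z => z * uxx) E1) as E1'.
    pose proof (f_equal (fun z => z * (u * ux)) E2) as E2'.
    pose proof (f_equal (fun z => z * ux) E3) as E3'.
    pose proof (f_equal (fun z => z * (u * u)) E4) as E4'.
    pose proof (f_equal (fun z => z * u) E5) as E5'.
    cbv beta in E1', E2', E3', E4', E5'.
    lra.
Qed.

Definition classifying_equations (A1 A2 : R -> R -> R) (T chi : R -> R) (alpha beta : R) : Prop :=
  (forall t x,
      T t * pd_t2 A2 t x + ((Derive T t + alpha) * x + chi t) * pd_x2 A2 t x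
      = (Derive T t + 2 * alpha) * A2 t x) /\
  (forall t x,
      T t * pd_t2 A1 t x + ((Derive T t + alpha) * x + chi t) * pd_x2 A1 t x
      = alpha * A1 t x - Derive (Derive T) t * x - Derive chi t + beta).

Section SolveDeterminingSystem.

Variables (A1 A2 : R -> R -> R) (T : R -> R) (X F G : R -> R -> R).
Hypothesis A1_xx_neq0 : forall t x, pd_x2 (pd_x2 A1) t x <> 0.
Hypotheses (T_smooth : smooth1 T) (X_ex : ex_pd2 X) (F_ex : ex_pd2 F) (G_ex : ex_pd2 G).
Hypothesis F0_smooth : smooth1 (fun t => F t 0).
Hypothesis system : determining_system A1 A2 T X F G.

Lemma F_eq_F0 t x : F t x = F t 0.
Proof.
  apply (eq_of_Derive_eq0 (fun s => F t s)); [intro s; apply (proj2 (F_ex t s))|].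
  intro s. destruct (system t s) as (_ & _ & _ & Fx & _). exact Fx.
Qed.

Lemma pd_x2_X t x : pd_x2 X t x = Derive T t + F t 0.
Proof. destruct (system t x) as (_ & E & _). rewrite <- (F_eq_F0 t x). lra. Qed.

Lemma X_affine t x : X t x = (Derive T t + F t 0) * x + X t 0.
Proof.
  apply (affine_of_Derive_const (fun s => X t s)); [intro s; apply (proj2 (X_ex t s))|].
  intro s. apply pd_x2_X.
Qed.

Lemma pd_x2_G t x : pd_x2 G t x = - Derive (fun s => F s 0) t.
Proof.
  destruct (system t x) as (_ & _ & _ & Fx & E & _).
  assert (Ft : pd_t2 F t x = Derive (fun s => F s 0) t).
  { apply Derive_ext. intro r. apply F_eq_F0. }
  assert (Fxx : pd_x2 (pd_x2 F) t x = 0).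
  { unfold pd_x2 at 1. apply (Derive_eq0_of_const _ 0).
    intro r. destruct (system t r) as (_ & _ & _ & Fx' & _). exact Fx'. }
  rewrite Ft, Fxx, Fx in E. lra.
Qed.

Lemma G_affine t x : G t x = - Derive (fun s => F s 0) t * x + G t 0.
Proof.
  apply (affine_of_Derive_const (fun s => G t s)); [intro s; apply (proj2 (G_ex t s))|].
  intro s. apply pd_x2_G.
Qed.

Lemma pd_x2_pd_x2_G t x : pd_x2 (pd_x2 G) t x = 0.
Proof.
  unfold pd_x2 at 1. apply (Derive_eq0_of_const _ (- Derive (fun s => F s 0) t)).
  intro r. apply pd_x2_G.
Qed.

Lemma pd_t2_G t x :
  pd_t2 G t x = - Derive (Derive (fun s => F s 0)) t * x + Derive (fun s => G s 0) t.
Proof.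
  unfold pd_t2. rewrite (Derive_ext _ _ t (fun s => G_affine s x)).
  apply is_derive_unique. auto_derive.
  - split; [apply smooth1_ex_derive, smooth1_Derive, F0_smooth|].
    split; [apply (proj1 (G_ex t 0))|exact I].
  - rewrite !Rmult_1_l. reflexivity.
Qed.

(* If F_t(t, 0) were nonzero, G_t = A1 G_x would make A1(t, .) affine in x. *)
Lemma Derive_F0_eq0 t : Derive (fun s => F s 0) t = 0.
Proof.
  destruct (Req_dec (Derive (fun s => F s 0) t) 0) as [Hz | Hnz]; [exact Hz|].
  exfalso. apply (A1_xx_neq0 t 0).
  set (f := fun s => F s 0) in *. set (h := fun s => G s 0).
  apply (Derive_Derive_affine (fun s => A1 t s) (Derive (Derive f) t / Derive f t)
           (- Derive h t / Derive f t)).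
  intro s. destruct (system t s) as (_ & _ & _ & _ & _ & E).
  rewrite pd_t2_G, pd_x2_pd_x2_G, pd_x2_G in E.
  fold f h in E.
  replace (Derive (Derive f) t / Derive f t * s + - Derive h t / Derive f t)
    with ((Derive (Derive f) t * s - Derive h t) / Derive f t) by (field; exact Hnz).
  replace (Derive (Derive f) t * s - Derive h t) with (A1 t s * Derive f t) by lra.
  field. exact Hnz.
Qed.

Lemma F_const t x : F t x = F 0 0.
Proof.
  rewrite F_eq_F0.
  exact (eq_of_Derive_eq0 (fun s => F s 0) (smooth1_ex_derive _ F0_smooth) Derive_F0_eq0 t 0).
Qed.

Lemma G_const t x : G t x = G 0 0.
Proof.
  assert (Hh : forall s, Derive (fun r => G r 0) s = 0).
  { intro s. destruct (system s 0) as (_ & _ & _ & _ & _ & E).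
    assert (Hf : Derive (Derive (fun r => F r 0)) s = 0)
      by exact (Derive_eq0_of_const _ 0 Derive_F0_eq0 s).
    rewrite pd_t2_G, pd_x2_pd_x2_G, pd_x2_G, Hf, Derive_F0_eq0 in E. lra. }
  rewrite G_affine, Derive_F0_eq0.
  rewrite (eq_of_Derive_eq0 (fun r => G r 0) (fun r => proj1 (G_ex r 0)) Hh t 0). ring.
Qed.

Lemma pd_x2_pd_x2_X t x : pd_x2 (pd_x2 X) t x = 0.
Proof.
  unfold pd_x2 at 1. apply (Derive_eq0_of_const _ (Derive T t + F t 0)).
  intro r. apply pd_x2_X.
Qed.

Lemma pd_t2_X t x : pd_t2 X t x = Derive (Derive T) t * x + Derive (fun s => X s 0) t.
Proof.
  unfold pd_t2.
  rewrite (Derive_ext _ (fun s => (Derive T s + F 0 0) * x + X s 0)).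
  - apply is_derive_unique. auto_derive.
    + split; [apply smooth1_ex_derive, smooth1_Derive, T_smooth|].
      split; [apply (proj1 (X_ex t 0)) | exact I].
    + rewrite !Rmult_1_l. reflexivity.
  - intro s. rewrite X_affine, (F_const s 0). reflexivity.
Qed.

Lemma classifying_of_determining_system :
  exists alpha beta : R,
    (forall t x, X t x = Derive T t * x + alpha * x + X t 0) /\
    (forall t x, F t x = alpha) /\ (forall t x, G t x = beta) /\
    classifying_equations A1 A2 T (fun t => X t 0) alpha beta.
Proof.
  exists (F 0 0), (G 0 0).
  assert (HX : forall t x, X t x = Derive T t * x + F 0 0 * x + X t 0).
  { intros t x. rewrite X_affine, (F_const t 0). ring. }
  split; [exact HX|]. split; [exact F_const|]. split; [exact G_const|].
  split; intros t x; cbv beta.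
  - destruct (system t x) as (E & _).
    rewrite pd_x2_X, (F_const t 0), HX in E. lra.
  - destruct (system t x) as (_ & _ & E & Fx & _).
    rewrite Fx, pd_x2_pd_x2_X, pd_t2_X, pd_x2_X, (F_const t 0), G_const, HX in E. lra.
Qed.

End SolveDeterminingSystem.

Lemma determining_system_of_classifying (A1 A2 : R -> R -> R) (T chi : R -> R) (alpha beta : R) :
  smooth1 T -> smooth1 chi -> classifying_equations A1 A2 T chi alpha beta ->
  determining_system A1 A2 T (fun t x => Derive T t * x + alpha * x + chi t)
    (fun _ _ => alpha) (fun _ _ => beta).
Proof.
  intros HT Hchi [E2 E1] t x.
  set (X := fun t x => Derive T t * x + alpha * x + chi t).
  assert (Xx : forall x, pd_x2 X t x = Derive T t + alpha).
  { intro y. apply is_derive_unique. unfold X. auto_derive; auto. ring. }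
  assert (Xxx : pd_x2 (pd_x2 X) t x = 0).
  { unfold pd_x2 at 1. apply (Derive_eq0_of_const _ (Derive T t + alpha)). exact Xx. }
  assert (Xt : pd_t2 X t x = Derive (Derive T) t * x + Derive chi t).
  { apply is_derive_unique. unfold X. auto_derive.
    - split; [apply smooth1_ex_derive, smooth1_Derive, HT|].
      split; [apply smooth1_ex_derive, Hchi | exact I].
    - rewrite !Rmult_1_l. reflexivity. }
  assert (Ct : forall c : R, pd_t2 (fun _ _ => c) t x = 0).
  { intro c. unfold pd_t2. apply Derive_const. }
  rewrite Xx, Xxx, Xt, !Ct, !pd_x2_const.
  specialize (E2 t x). specialize (E1 t x). unfold X. cbv beta.
  repeat split; lra.
Qed.

Lemma classifying_of_invariant (A1 A2 : R -> R -> R) (tau xi eta : R -> R -> R -> R) :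
  in_class_L1hat A1 A2 -> smooth3 tau -> smooth3 xi -> smooth3 eta ->
  invariant_on_solutions A1 A2 tau xi eta ->
  exists (alpha beta : R) (T chi : R -> R),
    smooth1 T /\ smooth1 chi /\
    (forall t x u,
        tau t x u = T t /\
        xi t x u = Derive T t * x + alpha * x + chi t /\
        eta t x u = alpha * u + beta) /\
    classifying_equations A1 A2 T chi alpha beta.
Proof.
  intros (_ & _ & A2_neq0 & A1_xx_neq0) Htau Hxi Heta HE.
  destruct (tau_depends_on_t_only A1 A2 A2_neq0 tau xi eta Htau HE) as [T ->].
  destruct (xi_independent_of_u A1 A2 A2_neq0 T xi eta Hxi HE) as [X ->].
  pose (F := fun t x => pd_u eta t x 0). pose (G := fun t x => eta t x 0).
  assert (Heta_FG : eta = fun t x u => F t x * u + G t x)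
    by exact (u_affine_of_pd_uu_eq0 eta Heta (pd_uu_eta_eq0 A1 A2 A2_neq0 T X eta HE)).
  assert (F_ex := ex_pd2_of_smooth3 eta [Du] 0 Heta).
  assert (G_ex := ex_pd2_of_smooth3 eta [] 0 Heta).
  rewrite Heta_FG in HE.
  apply invariant_reduced_iff in HE; [| exact F_ex | exact G_ex
    | exact (ex_pd2_of_smooth3 eta [Defs.Dx; Du] 0 Heta)
    | exact (ex_pd2_of_smooth3 eta [Defs.Dx] 0 Heta)].
  destruct (classifying_of_determining_system A1 A2 T X F G A1_xx_neq0
              (smooth1_of_smooth3 _ [] 0 0 Htau) (ex_pd2_of_smooth3 _ [] 0 Hxi)
              F_ex G_ex (smooth1_of_smooth3 eta [Du] 0 0 Heta) HE)
    as (alpha & beta & HX & HF & HG & Hcl).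
  exists alpha, beta, T, (fun t => X t 0).
  split; [exact (smooth1_of_smooth3 _ [] 0 0 Htau)|].
  split; [exact (smooth1_of_smooth3 _ [] 0 0 Hxi)|].
  split; [|exact Hcl].
  intros t x u. split; [reflexivity|]. split; [apply HX|].
  rewrite Heta_FG, HF, HG. reflexivity.
Qed.

Lemma invariant_of_classifying (A1 A2 : R -> R -> R) (T chi : R -> R) (alpha beta : R) :
  smooth1 T -> smooth1 chi -> classifying_equations A1 A2 T chi alpha beta ->
  let xi := fun t x _ => Derive T t * x + alpha * x + chi t in
  let eta := fun _ _ u => alpha * u + beta in
  smooth3 (fun t _ _ => T t) /\ smooth3 xi /\ smooth3 eta /\
  invariant_on_solutions A1 A2 (fun t _ _ => T t) xi eta.
Proof.
  intros HT Hchi Hcl xi eta.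
  split; [|split; [|split]].
  - apply (smooth3_ext (fun t x u => T t + 0 * x + 0 * u)); [intros; ring|].
    apply smooth3_affine; [exact HT | apply smooth1_const].
  - apply (smooth3_ext (fun t x u => chi t + (Derive T t + alpha) * x + 0 * u));
      [intros; unfold xi; ring|].
    apply smooth3_affine; [exact Hchi|].
    apply smooth1_plus; [apply smooth1_Derive, HT | apply smooth1_const].
  - apply (smooth3_ext (fun t x u => beta + 0 * x + alpha * u)); [intros; unfold eta; ring|].
    apply smooth3_affine; apply smooth1_const.
  - apply (invariant_reduced_iff A1 A2 T (fun t x => Derive T t * x + alpha * x + chi t)
             (fun _ _ => alpha) (fun _ _ => beta));
      [apply ex_pd2_const .. | rewrite pd_x2_const; apply ex_pd2_const
       | rewrite pd_x2_const; apply ex_pd2_const |].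
    apply determining_system_of_classifying; assumption.
Qed.

Theorem proposition19 (A1 A2 : R -> R -> R) :
  in_class_L1hat A1 A2 ->
  forall tau xi eta : R -> R -> R -> R,
    in_max_Lie_inv_alg A1 A2 tau xi eta <->
    exists (alpha beta : R) (T chi : R -> R),
      smooth1 T /\ smooth1 chi /\
      (forall t x u,
          tau t x u = T t /\
          xi t x u = Derive T t * x + alpha * x + chi t /\
          eta t x u = alpha * u + beta) /\
      (forall t x,
          T t * pd_t2 A2 t x + ((Derive T t + alpha) * x + chi t) * pd_x2 A2 t x
          = (Derive T t + 2 * alpha) * A2 t x) /\
      (forall t x,
          T t * pd_t2 A1 t x + ((Derive T t + alpha) * x + chi t) * pd_x2 A1 t x
          = alpha * A1 t x - Derive (Derive T) t * x - Derive chi t + beta).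
Proof.
  intros Hclass tau xi eta.
  rewrite in_max_Lie_inv_alg_iff. split.
  - intros (Htau & Hxi & Heta & HE).
    exact (classifying_of_invariant A1 A2 tau xi eta Hclass Htau Hxi Heta HE).
  - intros (alpha & beta & T & chi & HT & Hchi & Hshape & Hcl).
    replace tau with (fun t (_ _ : R) => T t) by
      (do 3 (apply functional_extensionality; intro); symmetry; apply Hshape).
    replace xi with (fun t x (_ : R) => Derive T t * x + alpha * x + chi t) by
      (do 3 (apply functional_extensionality; intro); symmetry; apply Hshape).
    replace eta with (fun (_ _ : R) u => alpha * u + beta) by
      (do 3 (apply functional_extensionality; intro); symmetry; apply Hshape).
    exact (invariant_of_classifying A1 A2 T chi alpha beta HT Hchi Hcl).
Qed.
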